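(* Let $b \ge 2$ and $k \ge 1$ be integers. Let $m\ge 1$ be an integer with $\gcd(m,b)=1$, and let $r$ be an integer with $0\le r<m$. Then there exist infinitely many positive integers $n$ with $n\equiv r\pmod m$ that are $b^{\ell}$-Niven for all $\ell$ with $1\le \ell\le k$. Moreover, for every $s_0\ge 1$ there exists such an $n$ with \[ \mathsf{s}_b(n)=\mathsf{s}_{b^2}(n)=\cdots = \mathsf{s}_{b^k}(n)\ge s_0. \]
   Context: For an integer base $g\ge 2$ and a positive integer $c$ with base-$g$ expansion $c=\sum_{i=0}^{L} d_i g^i$, $d_i\in\{0,1,\dots,g-1\}$, $d_L\neq 0$, the base-$g$ digit sum is $\mathsf{s}_g(c)=\sum_{i=0}^L d_i$. A positive integer $c$ is called $g$-Niven if $\mathsf{s}_g(c)\mid c$. *)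

From mathcomp Require Import all_boot.

(* Base-g digit sum of c, computed by repeated Euclidean division.
   The fuel c suffices for g >= 2 since c %/ g < c for c > 0. *)
Fixpoint digit_sum_fuel (fuel g c : nat) : nat :=
  match fuel with
  | 0 => 0
  | fuel'.+1 => if c == 0 then 0 else c %% g + digit_sum_fuel fuel' g (c %/ g)
  end.

Definition digit_sum (g c : nat) : nat := digit_sum_fuel c g c.

Definition niven (g c : nat) : Prop := 0 < c /\ digit_sum g c %| c.

(* Choose s >= s0 with s = r (mod m) and s = 1 (mod b), so that s is coprime
   to b, and put w = b ^ (k`! * totient (m * s)).  Then w = 1 (mod m * s) by
   Euler's theorem, and w is a power of every base b ^ l with l <= k.  Hence
   n = w ^ N * (1 + w + ... + w ^ (s - 1)) has s digits equal to 1 and all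
   others 0 in each base b ^ l, while n = s (mod m * s): the digit sums all
   equal s, s divides n, and n = r (mod m). *)

From mathcomp Require Import all_boot cyclic.

Lemma digit_sum_fuelE g f c : 1 < g -> c <= f ->
  digit_sum_fuel f g c = digit_sum g c.
Proof.
move=> g_gt1; rewrite /digit_sum.
suff fuel_irr f1 f2 : c <= f1 -> c <= f2 ->
    digit_sum_fuel f1 g c = digit_sum_fuel f2 g c by move/fuel_irr; apply.
elim: f1 f2 c => [|f1 IH] [|f2] [|c] //= c_le1 c_le2.
have lt_div : c.+1 %/ g < c.+1 by apply: ltn_Pdiv.
by rewrite (IH f2) // -ltnS (leq_trans lt_div).
Qed.

Lemma digit_sumE g c : 1 < g ->
  digit_sum g c = if c == 0 then 0 else c %% g + digit_sum g (c %/ g).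
Proof.
move=> g_gt1; rewrite {1}/digit_sum; case: c => //= c.
by rewrite digit_sum_fuelE // -ltnS ltn_Pdiv.
Qed.

Lemma digit_sum_mull g c : 1 < g -> digit_sum g (g * c) = digit_sum g c.
Proof.
move=> g_gt1; have g_gt0 := ltnW g_gt1.
rewrite digit_sumE //; case: c => [|c]; first by rewrite muln0.
by rewrite muln_eq0 (gtn_eqF g_gt0) /= modnMr add0n mulKn.
Qed.

Lemma digit_sum_expl g e c : 1 < g -> digit_sum g (g ^ e * c) = digit_sum g c.
Proof.
move=> g_gt1; elim: e => [|e IH]; first by rewrite mul1n.
by rewrite expnS -mulnA digit_sum_mull.
Qed.

Lemma digit_sum_1Dmul g c : 1 < g ->
  digit_sum g (1 + g * c) = (digit_sum g c).+1.
Proof.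
move=> g_gt1; rewrite digit_sumE // add1n /= -addn1 mulnC modnMDl modn_small //.
by rewrite divnMDl ?(ltnW g_gt1) // divn_small // addn0 add1n.
Qed.

Fixpoint repunit (w s : nat) : nat :=
  if s is s'.+1 then 1 + w * repunit w s' else 0.

Lemma repunit_gt0 w s : (0 < repunit w s) = (0 < s).
Proof. by case: s. Qed.

Lemma digit_sum_repunit g q s : 1 < g -> 0 < q ->
  digit_sum g (repunit (g ^ q) s) = s.
Proof.
move=> g_gt1 q_gt0; elim: s => [|s IH] /=; first by rewrite digit_sumE.
have -> : g ^ q * repunit (g ^ q) s = g * (g ^ q.-1 * repunit (g ^ q) s).
  by rewrite mulnA -expnS prednK.
by rewrite digit_sum_1Dmul // digit_sum_expl // IH.
Qed.

Lemma repunit_mod w s M : w = 1 %[mod M] -> repunit w s = s %[mod M].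
Proof.
move=> w1; elim: s => [|s IH] //=.
by rewrite -modnDmr -modnMml w1 modnMml -modnMmr IH modnMmr mul1n modnDmr add1n.
Qed.

Lemma exists_coprime_in_class b m r s0 : 0 < b -> 0 < m -> coprime m b ->
  exists s, [/\ s0 <= s, s = r %[mod m] & coprime s b].
Proof.
move=> b_gt0 m_gt0 cop_mb; exists (m * b * s0 + chinese m b r 1); split.
- by rewrite (leq_trans _ (leq_addr _ _)) // leq_pmull // muln_gt0 m_gt0.
- by rewrite -mulnA [m * _]mulnC modnMDl chinese_modl.
- by rewrite -coprime_modl mulnAC modnMDl chinese_modr // coprime_modl coprime1n.
Qed.

Section MultibaseRepunit.

Variables (b k m s : nat).
Hypotheses (b_gt1 : 1 < b) (m_gt0 : 0 < m) (cop_mb : coprime m b)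
  (s_gt0 : 0 < s) (cop_sb : coprime s b).

Let w := b ^ (k`! * totient (m * s)).

Let phi_gt0 : 0 < totient (m * s).
Proof. by rewrite totient_gt0 muln_gt0 m_gt0. Qed.

Lemma multibase_repunit_mod N : w ^ N * repunit w s = s %[mod m * s].
Proof.
have w1 : w = 1 %[mod m * s].
  by rewrite /w expnM Euler_exp_totient // coprimeXl // coprime_sym coprimeMl cop_mb.
by rewrite -modnMml -modnXm w1 modnXm exp1n modnMml mul1n repunit_mod.
Qed.

Lemma digit_sum_multibase_repunit N l : 0 < l <= k ->
  digit_sum (b ^ l) (w ^ N * repunit w s) = s.
Proof.
move=> l_range; have l_gt0 : 0 < l by case/andP: l_range.
have q_gt0 : 0 < k`! %/ l * totient (m * s).
  by rewrite muln_gt0 phi_gt0 divn_gt0 // dvdn_leq ?fact_gt0 ?dvdn_fact.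
have bl_gt1 : 1 < b ^ l by rewrite -(exp1n l) ltn_exp2r.
have -> : w = (b ^ l) ^ (k`! %/ l * totient (m * s)).
  by rewrite -expnM mulnA [l * _]mulnC divnK ?dvdn_fact.
by rewrite -expnM digit_sum_expl // digit_sum_repunit.
Qed.

Lemma gt_multibase_repunit N : N < w ^ N * repunit w s.
Proof.
have w_gt1 : 1 < w.
  by rewrite -(exp1n (k`! * totient (m * s))) ltn_exp2r // muln_gt0 fact_gt0.
by rewrite (leq_trans (ltn_expl N w_gt1)) // leq_pmulr // repunit_gt0.
Qed.

End MultibaseRepunit.

Lemma exists_multibase_niven b k m r :
  1 < b -> 0 < k -> 0 < m -> coprime m b ->
  forall N s0, exists n, [/\ N < n, n = r %[mod m],
    forall l, 0 < l <= k -> niven (b ^ l) n,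
    forall l, 0 < l <= k -> digit_sum (b ^ l) n = digit_sum b n
    & s0 <= digit_sum b n].
Proof.
move=> b_gt1 k_gt0 m_gt0 cop_mb N s0.
have [s [s0_le s_r cop_sb]] := exists_coprime_in_class b m r s0 (ltnW b_gt1) m_gt0 cop_mb.
have s_gt0 : 0 < s.
  by rewrite lt0n; apply: contraTneq cop_sb => ->; rewrite /coprime gcd0n gtn_eqF.
have n_ms := multibase_repunit_mod b k m s cop_mb cop_sb N.
have ds_l := digit_sum_multibase_repunit b k m s b_gt1 m_gt0 s_gt0 N.
have n_gt := gt_multibase_repunit b k m s b_gt1 m_gt0 s_gt0 N.
set n := _ ^ N * _ in n_ms ds_l n_gt *.
have ds_1 : digit_sum b n = s by rewrite -{1}(expn1 b) ds_l ?k_gt0.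
exists n; split; rewrite ?ds_1 //.
- by rewrite -(modn_dvdm n (dvdn_mulr s (dvdnn m))) n_ms modn_dvdm ?dvdn_mulr.
- move=> l l_range; split; first exact: leq_ltn_trans n_gt.
  rewrite ds_l // /dvdn -(modn_dvdm n (dvdn_mull m (dvdnn s))) n_ms.
  by rewrite modn_dvdm ?dvdn_mull // modnn.
Qed.

Theorem corollary7p1 (b k m r : nat) :
  2 <= b -> 1 <= k -> 1 <= m -> coprime m b -> r < m ->
  (forall N : nat, exists n : nat,
     N < n /\ 0 < n /\ n = r %[mod m] /\
     (forall l : nat, 1 <= l <= k -> niven (b ^ l) n)) /\
  (forall s0 : nat, 1 <= s0 -> exists n : nat,
     0 < n /\ n = r %[mod m] /\
     (forall l : nat, 1 <= l <= k -> niven (b ^ l) n) /\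
     (forall l : nat, 1 <= l <= k -> digit_sum (b ^ l) n = digit_sum b n) /\
     s0 <= digit_sum b n).
Proof.
move=> b_gt1 k_gt0 m_gt0 cop_mb _.
have witness := exists_multibase_niven b k m r b_gt1 k_gt0 m_gt0 cop_mb.
split=> [N | s0 _].
- have [n [N_lt ? ? _ _]] := witness N 0.
  by exists n; do !split => //; apply: leq_ltn_trans N_lt.
- by have [n [? ? ? ? ?]] := witness 0 s0; exists n.
Qed.
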